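(* Let $G$ be a connected graph with $n\geq 2$ vertices and $m$ edges, and let $T(G)$ be its triangulation. Then $$R^+(T(G))=2R^+(G)+2R^*(G)+\frac{12m^2-mn-n^2-2m+n}{3}.$$
   Context: All graphs are finite, undirected, without loops or multiple edges. For a connected graph $H$ and vertices $i,j$, the resistance distance $\Omega_{ij}$ is the effective resistance between $i$ and $j$ in the electrical network obtained from $H$ by replacing each edge by a unit resistor. With $d_i$ the degree of vertex $i$ in $H$ and sums over unordered pairs of distinct vertices of $H$: $R^+(H)=\sum_{\{i,j\}\subseteq V(H)}(d_i+d_j)\Omega_{ij}$ (additive degree-Kirchhoff index) and $R^*(H)=\sum_{\{i,j\}\subseteq V(H)}d_id_j\Omega_{ij}$ (multiplicative degree-Kirchhoff index), with degrees and resistances taken in $H$. The triangulation $T(G)$ is obtained from $G$ by adding, for each edge $uv$, a new vertex $w$ adjacent to both $u$ and $v$ (keeping the edge $uv$). *)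

From HB Require Import structures.
From mathcomp Require Import all_boot all_order all_algebra.
From Stdlib Require Import ClassicalEpsilon.
Set Implicit Arguments. Unset Strict Implicit. Unset Printing Implicit Defensive.
Import Order.TTheory GRing.Theory Num.Theory.
Local Open Scope ring_scope.

Section Graphs.
Variable R : realFieldType.
Variable V : finType.
Variable e : rel V.

Definition simple_graph : Prop := symmetric e /\ irreflexive e.
Definition connected_graph : Prop := forall x y : V, connect e x y.

Definition deg (v : V) : nat := #|[set u | e v u]|.

(* Kirchhoff's current law: phi is a potential for a unit current entering
   at i and leaving at j, each edge being a unit resistor *)
Definition unit_current_potential (i j : V) (phi : V -> R) : Prop :=
  forall v : V, \sum_(u | e v u) (phi v - phi u) =
                ((v == i)%:R - (v == j)%:R).

(* effective resistance: potential difference between i and j for any such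
   potential (unique up to an additive constant when the graph is connected) *)
Definition resistance (i j : V) : R :=
  let phi := epsilon (inhabits (fun _ : V => 0 : R))
                     (unit_current_potential i j) in
  phi i - phi j.

(* sums over unordered pairs {i,j} of distinct vertices = half of ordered sums *)
Definition add_deg_kirchhoff : R :=
  (\sum_(i : V) \sum_(j : V | j != i)
      ((deg i + deg j)%:R * resistance i j)) / 2.
Definition mul_deg_kirchhoff : R :=
  (\sum_(i : V) \sum_(j : V | j != i)
      ((deg i * deg j)%:R * resistance i j)) / 2.

Definition is_edge (A : {set V}) : bool :=
  [exists u, exists v, e u v && (A == [set u; v])].
Definition edge_type := {A : {set V} | is_edge A}.
Definition num_edges : nat := #|{: edge_type}|.

(* triangulation T(G): vertex set V + edges; keep edges of G, and join each
   new vertex w_{uv} to u and v *)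
Definition tri_vertex := (V + edge_type)%type.
Definition tri_rel : rel tri_vertex := fun x y =>
  match x, y with
  | inl u, inl v => e u v
  | inl u, inr A => u \in val A
  | inr A, inl u => u \in val A
  | inr _, inr _ => false
  end.
End Graphs.

(* A unit-current potential of the triangulation T(G) is obtained from one of
   G (see [tri_lift]): multiply it by 2/3 on old vertices and give the new
   vertex of the edge ab the value (phi a + phi b)/3 + c/2, where c is the
   current injected there.  Hence Omega_T(i,j) = 2/3 Omega(i,j), and the
   resistances involving new vertices are explicit combinations of resistances
   of G.  Degrees in T(G) are 2 d_v and 2, so R^+(T(G)), written as
   sum_y sum_x d^T_x Omega_T(y,x), reduces to the degree-weighted sums
   sum_x d_x Omega(y,x) of G, which give R^+(G) and R^*(G), and to Foster's
   theorem sum_{uv in E} Omega(u,v) = n - 1. *)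

From HB Require Import structures.
From mathcomp Require Import all_boot all_order all_algebra.
From mathcomp Require Import ring lra zify.
From Stdlib Require Import ClassicalEpsilon.
Set Implicit Arguments. Unset Strict Implicit. Unset Printing Implicit Defensive.
Import Order.TTheory GRing.Theory Num.Theory.
Local Open Scope ring_scope.

Lemma sum_indicatorM (R : pzRingType) (I : finType) (i : I) (f : I -> R) :
  \sum_j (j == i)%:R * f j = f i.
Proof.
by rewrite (bigD1 i) //= eqxx mul1r big1 ?addr0 // => j /negPf ->; rewrite mul0r.
Qed.

Lemma sum_indicator_in (R : pzRingType) (I : finType) (P : pred I) (i : I) :
  \sum_(j | P j) (j == i)%:R = (P i)%:R :> R.
Proof.
rewrite big_mkcond (bigD1 i) //= eqxx big1 ?addr0; first by case: (P i).
by move=> j /negPf ->; case: (P j).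
Qed.

Lemma sum_indicator (R : pzRingType) (I : finType) (i : I) :
  \sum_j (j == i)%:R = 1 :> R.
Proof. exact: sum_indicator_in. Qed.

Lemma indicator_set2 (R : pzRingType) (T : finType) (a b x : T) : a != b ->
  (x \in [set a; b])%:R = (x == a)%:R + (x == b)%:R :> R.
Proof.
move=> ab; rewrite !inE; case: (eqVneq x a) => [->|]; last by rewrite add0r.
by rewrite (negPf ab) addr0.
Qed.

Section Laplacian.
Variables (R : realFieldType) (V : finType) (e : rel V).

Definition laplacian (phi : V -> R) v : R := \sum_(u | e v u) (phi v - phi u).

Lemma laplacianD f g v :
  laplacian (fun x => f x + g x) v = laplacian f v + laplacian g v.
Proof. by rewrite /laplacian -big_split; apply: eq_bigr => u _ /=; ring. Qed.

Lemma laplacianZ a f v : laplacian (fun x => a * f x) v = a * laplacian f v.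
Proof. by rewrite /laplacian mulr_sumr; apply: eq_bigr => u _ /=; ring. Qed.

Lemma laplacianB f g v :
  laplacian (fun x => f x - g x) v = laplacian f v - laplacian g v.
Proof. by rewrite /laplacian -sumrB; apply: eq_bigr => u _ /=; ring. Qed.

Lemma deg_sum v : (deg e v)%:R = \sum_(u | e v u) 1 :> R.
Proof. by rewrite /deg -sum1_card natr_sum; apply: eq_bigl => u; rewrite inE. Qed.

(* Maximum principle: along any path from a maximum of a harmonic function
   the value cannot drop, since it is the average of the neighbours. *)
Lemma harmonic_const (d : V -> R) : connected_graph e ->
  (forall v, laplacian d v = 0) -> forall x y, d x = d y.
Proof.
move=> con harm x y.
case: (@arg_maxP _ R V x predT d) => // m _ dm_max.
suff dm : forall z, connect e m z -> d z = d m.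
  by rewrite (dm x (con _ _)) (dm y (con _ _)).
have step a b : d a = d m -> e a b -> d b = d m.
  move=> da eab; apply/eqP; rewrite -da eq_sym -subr_eq0; apply/eqP.
  apply: (@psumr_eq0P R V (e a) (fun u => d a - d u) _ (harm a) b eab) => u _.
  by rewrite subr_ge0 da; apply: dm_max.
move=> z /connectP [p pth ->]; have : d m = d m by [].
elim: p {1 3 4}m pth => [|b p IH] a /=; first by move=> _ ->.
move=> /andP [eab pth] da; by apply: IH pth _; rewrite (step a b) // -da.
Qed.

Definition lap_coef v u : R := (v == u)%:R * (deg e v)%:R - (e v u)%:R.

Lemma laplacian_coefE phi v : laplacian phi v = \sum_u lap_coef v u * phi u.
Proof.
rewrite /lap_coef; under eq_bigr do rewrite mulrBl eq_sym -mulrA.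
rewrite sumrB sum_indicatorM /laplacian sumrB deg_sum mulr_suml; congr (_ - _).
  by apply: eq_bigr => u _; rewrite mul1r.
by rewrite big_mkcond; apply: eq_bigr => u _; case: (e v u); rewrite ?mul1r ?mul0r.
Qed.

Lemma lap_coef_row v : \sum_u lap_coef v u = 0.
Proof.
rewrite -[LHS]mulr1 mulr_suml -(laplacian_coefE (fun=> 1)).
by rewrite /laplacian big1 // => u _; rewrite subrr.
Qed.

Hypothesis e_sym : symmetric e.

Lemma lap_coefC v u : lap_coef v u = lap_coef u v.
Proof. by rewrite /lap_coef eq_sym e_sym; case: eqP => [->|]; rewrite ?mul0r. Qed.

Definition lap_mx : 'M[R]_#|V| := \matrix_(i, j) lap_coef (enum_val i) (enum_val j).

Lemma sum_enum_val (F : V -> R) : \sum_u F u = \sum_(i < #|V|) F (enum_val i).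
Proof. by rewrite -(big_enum_val (A := predT)); apply: eq_bigl. Qed.

Lemma mulmx_lap_mx (x : 'rV[R]_#|V|) j :
  (x *m lap_mx) 0 j = laplacian (fun u => x 0 (enum_rank u)) (enum_val j).
Proof.
rewrite mxE laplacian_coefE sum_enum_val.
by apply: eq_bigr => k _; rewrite mxE enum_valK lap_coefC mulrC.
Qed.

Hypothesis e_con : connected_graph e.

Lemma mxrank_ker_lap_mx : (\rank (kermx lap_mx) <= 1)%N.
Proof.
apply: (@leq_trans (\rank (const_mx 1 : 'rV[R]_#|V|))); last exact: rank_leq_row.
apply: mxrankS; apply/row_subP => i; set x := row i (kermx lap_mx).
have harm v : laplacian (fun u => x 0 (enum_rank u)) v = 0.
  by rewrite -[v]enum_rankK -mulmx_lap_mx /x -row_mul mulmx_ker row0 mxE.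
suff -> : x = x 0 i *: const_mx 1 by apply: scalemx_sub; exact: submx_refl.
apply/rowP => l; have := harmonic_const e_con harm (enum_val l) (enum_val i).
by rewrite !enum_valK => ->; rewrite !mxE mulr1.
Qed.

(* The range of the Laplacian is the hyperplane of sum-zero vectors: it lies in
   it by [lap_coef_row], and has the same dimension [#|V| - 1]. *)
Lemma potential_exists (b : V -> R) :
  \sum_v b v = 0 -> exists phi, forall v, laplacian phi v = b v.
Proof.
move=> b0; case: (pickP (@predT V)) => [v0 _|V0]; last by exists (fun=> 0) => v; have := V0 v.
pose ones : 'M[R]_(#|V|, 1) := const_mx 1.
have row_ones k (A : 'M[R]_(k, #|V|)) : (forall i, \sum_j A i j = 0) -> (A <= kermx ones)%MS.
  move=> A0; apply/sub_kermxP/matrixP => i l; rewrite !mxE -[RHS](A0 i).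
  by apply: eq_bigr => j _; rewrite !mxE mulr1.
have lapH : (lap_mx <= kermx ones)%MS.
  by apply: row_ones => i; rewrite -[RHS](lap_coef_row (enum_val i)) sum_enum_val;
     apply: eq_bigr => j _; rewrite mxE.
have rk_ones : (0 < \rank ones)%N.
  rewrite lt0n mxrank_eq0; apply/eqP => /matrixP /(_ (enum_rank v0) 0).
  by rewrite !mxE => /eqP; rewrite oner_eq0.
have Hlap : (kermx ones <= lap_mx)%MS.
  rewrite -(mxrank_leqif_sup lapH).2; apply/eqP/anti_leq; rewrite mxrankS //=.
  (* [set] identifies the two syntactic forms of [#|V|] produced by [mxrank_ker]. *)
  move: rk_ones (mxrank_ker_lap_mx); rewrite !mxrank_ker; set n := #|V|; lia.
pose bv : 'rV[R]_#|V| := \row_i b (enum_val i).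
have /submxP [D bD] : (bv <= lap_mx)%MS.
  apply: submx_trans Hlap; apply: row_ones => i; rewrite -[RHS]b0 sum_enum_val.
  by apply: eq_bigr => j _; rewrite mxE.
exists (fun u => D 0 (enum_rank u)) => v.
by move/matrixP: bD => /(_ 0 (enum_rank v)); rewrite mulmx_lap_mx enum_rankK mxE enum_rankK.
Qed.

Lemma resistancexx i : resistance R e i i = 0.
Proof. exact: subrr. Qed.

Lemma resistanceE i j phi :
  unit_current_potential e i j phi -> resistance R e i j = phi i - phi j.
Proof.
move=> Hphi; rewrite /resistance; set psi := epsilon _ _.
have Hpsi : unit_current_potential e i j psi by apply: epsilon_spec; exists phi.
have harm v : laplacian (fun x => psi x - phi x) v = 0.
  by rewrite laplacianB; have := Hpsi v; have := Hphi v; rewrite /laplacian => -> ->; rewrite subrr.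
have := harmonic_const e_con harm i j; lra.
Qed.

Lemma unit_current_potential_exists i j :
  exists phi : V -> R, unit_current_potential e i j phi.
Proof.
by apply: potential_exists; rewrite sumrB !sum_indicator subrr.
Qed.

Lemma resistanceC i j : resistance R e i j = resistance R e j i.
Proof.
have [phi Hphi] := unit_current_potential_exists i j.
have Hneg : unit_current_potential e j i (fun x => - phi x).
  move=> v; rewrite -[RHS]opprB -(Hphi v) -sumrN; apply: eq_bigr => u _; ring.
rewrite (resistanceE Hphi) (resistanceE Hneg); ring.
Qed.

End Laplacian.

Section Edges.
Variables (R : realFieldType) (V : finType) (e : rel V).
Hypotheses (e_sym : symmetric e) (e_irr : irreflexive e).

Local Notation D v := ((deg e v)%:R : R).

Lemma sum_adjC (F : V -> V -> R) :
  \sum_v \sum_(u | e v u) F v u = \sum_v \sum_(u | e v u) F u v.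
Proof.
under eq_bigr do rewrite big_mkcond.
rewrite exchange_big; apply: eq_bigr => v _; rewrite [RHS]big_mkcond.
by apply: eq_bigr => u _; rewrite e_sym.
Qed.

Lemma sum_adj_deg (g : V -> R) : \sum_u \sum_(w | e u w) g u = \sum_u D u * g u.
Proof. by apply: eq_bigr => u _; rewrite deg_sum mulr_suml; under [RHS]eq_bigr do rewrite mul1r. Qed.

Lemma edgeP (A : edge_type e) :
  exists a b, [/\ e a b, a != b & val A = [set a; b]].
Proof.
case: A => A /= /existsP [a /existsP [b /andP [eab /eqP ->]]].
by exists a, b; split => //; apply: contraTneq eab => ->; rewrite e_irr.
Qed.

Lemma card_edge (A : edge_type e) : #|val A| = 2%N.
Proof. by have [a [b [_ ab ->]]] := edgeP A; rewrite cards2 ab. Qed.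

Lemma sum_set2 (f : V -> R) a b : a != b -> \sum_(u in [set a; b]) f u = f a + f b.
Proof. by move=> ab; rewrite big_setU1 ?big_set1 // inE. Qed.

(* The endpoint of [A] other than [v]; a junk value when [v \notin val A]. *)
Definition other_end v (A : edge_type e) : V := odflt v [pick w in val A :\ v].

Lemma other_endP v (A : edge_type e) : v \in val A ->
  [/\ val A = [set v; other_end v A], e v (other_end v A) & v != other_end v A].
Proof.
have [a [b [eab ab EA]]] := edgeP A.
rewrite /other_end EA; case: pickP => [w|]; last first.
  move=> none; rewrite !inE => /orP [] /eqP vE; subst v.
  - by have := none b; rewrite !inE eqxx orbT andbT eq_sym ab.
  - by have := none a; rewrite !inE eqxx andbT ab.
rewrite !inE => /andP [wv wab] /orP [] /eqP vE; subst v => /=.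
- by move: wab wv; case/orP => /eqP ->; rewrite ?eqxx.
- move: wab wv; case/orP => /eqP ->; last by rewrite eqxx.
  by move=> _; split; [rewrite setUC | rewrite e_sym | rewrite eq_sym].
Qed.

Lemma sum_edges_at v (f : V -> R) :
  \sum_(A : edge_type e | v \in val A) f (other_end v A) = \sum_(u | e v u) f u.
Proof.
symmetry.
rewrite (@reindex_omap _ _ _ _ _ (other_end v) (fun u => insub [set v; u])).
  apply: eq_bigl => A; apply/idP/idP.
    case/andP => _ /eqP H.
    have := @insubK _ _ (edge_type e) [set v; other_end v A].
    by rewrite H /= => ->; rewrite set21.
  by move=> vA; have [E1 E2 _] := other_endP vA; rewrite E2 /= -E1 valK.
move=> u evu.
have Hs : is_edge e [set v; u].
  by apply/existsP; exists v; apply/existsP; exists u; rewrite evu eqxx.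
rewrite (insubT _ Hs) /=; congr Some.
have vin : v \in val (Sub [set v; u] Hs : edge_type e) by rewrite SubK set21.
have [E1 _ _] := other_endP vin; move: E1; rewrite SubK => E1.
have : u \in [set v; other_end v (Sub [set v; u] Hs)] by rewrite -E1 set22.
by rewrite !inE => /orP [/eqP uv|/eqP //]; rewrite uv e_irr in evu.
Qed.

(* Each edge is counted twice among ordered adjacent pairs, once from each end. *)
Lemma sum_edges (F : edge_type e -> R) (f : V -> V -> R) :
  (forall (A : edge_type e) u, u \in val A -> F A = f u (other_end u A)) ->
  \sum_A F A = (\sum_u \sum_(w | e u w) f u w) / 2.
Proof.
move=> Ff; apply: (canRL (mulfK _)); first by rewrite pnatr_eq0.
rewrite mulr_natr -sumrMnl.
transitivity (\sum_(A : edge_type e) \sum_(u in val A) f u (other_end u A)).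
  apply: eq_bigr => A _; rewrite -(card_edge A) -sumr_const.
  by apply: eq_bigr => u uA; rewrite (Ff A u uA).
under eq_bigr do rewrite big_mkcond.
rewrite exchange_big; apply: eq_bigr => u _.
by rewrite -(sum_edges_at u (f u)) [RHS]big_mkcond.
Qed.

Lemma handshake : \sum_u D u = 2 * (num_edges e)%:R.
Proof.
rewrite /num_edges -sum1_card natr_sum (sum_edges (f := fun _ _ => 1)) //.
rewrite (sum_adj_deg (fun=> 1)); under [in RHS]eq_bigr do rewrite mulr1.
by field.
Qed.

End Edges.

Section Green.
Variables (R : realFieldType) (V : finType) (e : rel V).
Hypotheses (e_sym : symmetric e) (e_con : connected_graph e).
Variable r : V.

Local Notation Om := (resistance R e).

Definition green (x : V) : V -> R := epsilon (inhabits (fun=> 0))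
  (fun g => unit_current_potential e x r g /\ g r = 0).

Lemma green_spec x : unit_current_potential e x r (green x) /\ green x r = 0.
Proof.
rewrite /green; apply epsilon_spec; have [phi Hphi] := unit_current_potential_exists R e_sym e_con x r.
exists (fun v => phi v - phi r); split; last by rewrite subrr.
by move=> v; rewrite -(Hphi v); apply: eq_bigr => u _; ring.
Qed.

Lemma laplacian_green x v : laplacian e (green x) v = (v == x)%:R - (v == r)%:R.
Proof. exact: (green_spec x).1. Qed.

Lemma laplacian_self_adjoint (f h : V -> R) :
  \sum_v laplacian e f v * h v = \sum_v f v * laplacian e h v.
Proof.
under eq_bigr do rewrite laplacian_coefE mulr_suml.
under [RHS]eq_bigr do rewrite laplacian_coefE mulr_sumr.
rewrite exchange_big; apply: eq_bigr => v _; apply: eq_bigr => u _.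
rewrite (lap_coefC R e_sym); ring.
Qed.

Lemma greenC x y : green x y = green y x.
Proof.
have := laplacian_self_adjoint (green y) (green x).
under eq_bigr do rewrite laplacian_green mulrBl.
under [X in _ = X -> _]eq_bigr do rewrite laplacian_green mulrBr ![green y _ * _]mulrC.
by rewrite !sumrB !sum_indicatorM (green_spec x).2 (green_spec y).2 !subr0.
Qed.

Lemma resistance_green i j : Om i j = green i i + green j j - 2 * green i j.
Proof.
have Hij : unit_current_potential e i j (fun v => green i v - green j v).
  by move=> v; rewrite -[LHS]/(laplacian e _ v) laplacianB !laplacian_green; ring.
rewrite (resistanceE e_con Hij) (greenC j i); ring.
Qed.

End Green.

Section Foster.
Variables (R : realFieldType) (V : finType) (e : rel V).
Hypotheses (e_sym : symmetric e) (e_con : connected_graph e).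

(* Each resistance splits as [(G_v v - G_v u) + (G_u u - G_u v)], and the sum of
   [G_v v - G_v u] over the neighbours of [v] is [laplacian (green v) v]. *)
Lemma foster : (0 < #|V|)%N ->
  \sum_v \sum_(u | e v u) resistance R e v u = 2 * (#|V|%:R - 1).
Proof.
case/card_gt0P=> r _; pose G := green R e r.
have half : \sum_v \sum_(u | e v u) (G v v - G v u) = #|V|%:R - 1.
  transitivity (\sum_v laplacian e (G v) v); first by [].
  under eq_bigr do rewrite (laplacian_green R e_sym e_con) eqxx.
  by rewrite sumrB sum_indicator sumr_const.
transitivity (\sum_v \sum_(u | e v u) ((G v v - G v u) + (G u u - G u v))).
  apply: eq_bigr => v _; apply: eq_bigr => u _.
  by rewrite /G (resistance_green R e_sym e_con r) (greenC R e_sym e_con r u v); ring.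
under eq_bigr do rewrite big_split.
by rewrite big_split /= -[X in _ + X](sum_adjC e_sym) half; ring.
Qed.

End Foster.

Section DegreeKirchhoff.
Variables (R : realFieldType) (V : finType) (e : rel V).

Local Notation D v := ((deg e v)%:R : R).

Definition deg_resistance (y : V) : R := \sum_x D x * resistance R e y x.

Lemma sum_resistance_neq (F : V -> V -> R) :
  \sum_i \sum_(j | j != i) F i j * resistance R e i j =
  \sum_i \sum_j F i j * resistance R e i j.
Proof. by apply: eq_bigr => i _; rewrite [RHS](bigD1 i) //= resistancexx mulr0 add0r. Qed.

Lemma mul_deg_kirchhoffE :
  mul_deg_kirchhoff R e = (\sum_y D y * deg_resistance y) / 2.
Proof.
rewrite /mul_deg_kirchhoff sum_resistance_neq; congr (_ / 2).
by apply: eq_bigr => i _; rewrite mulr_sumr; apply: eq_bigr => j _; rewrite natrM mulrA.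
Qed.

Lemma add_deg_kirchhoffE : symmetric e -> connected_graph e ->
  add_deg_kirchhoff R e = \sum_y deg_resistance y.
Proof.
move=> e_sym e_con; rewrite /add_deg_kirchhoff sum_resistance_neq.
under eq_bigr do under eq_bigr do rewrite natrD mulrDl.
under eq_bigr do rewrite big_split /=.
rewrite big_split /= [X in X + _]exchange_big /=.
have -> : \sum_j \sum_i D i * resistance R e i j = \sum_j deg_resistance j.
  by apply: eq_bigr => j _; apply: eq_bigr => i _; rewrite (resistanceC R e_sym e_con).
by rewrite -/(\sum_i deg_resistance i); field.
Qed.

End DegreeKirchhoff.

Section Triangulation.
Variables (R : realFieldType) (V : finType) (e : rel V).
Hypotheses (e_sym : symmetric e) (e_irr : irreflexive e) (e_con : connected_graph e).

Local Notation T := (@tri_rel V e).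

Lemma tri_rel_sym : symmetric T.
Proof. by case=> [u|A] [v|B] //=; rewrite e_sym. Qed.

Lemma tri_connected : connected_graph T.
Proof.
have old u v : connect T (inl u) (inl v).
  have /connectP [p pth ->] := e_con u v.
  elim: p u pth => [|w p IH] u /=; first by move=> _; exact: connect0.
  by case/andP => euw pth; apply: connect_trans (IH _ pth); apply: connect1.
have new A : exists a, connect T (inr A) (inl a) /\ connect T (inl a) (inr A).
  have [a [b [_ _ EA]]] := edgeP e_irr A.
  by exists a; split; apply: connect1; rewrite /= EA set21.
case=> [u|A] [v|B].
- exact: old.
- by have [b [_ H]] := new B; exact: connect_trans (old u b) H.
- by have [a [H _]] := new A; exact: connect_trans H (old a v).
- have [a [H _]] := new A; have [b [_ H']] := new B.
  exact: connect_trans (connect_trans H (old a b)) H'.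
Qed.

Lemma sum_tri_adj_old v (F : tri_vertex e -> R) : \sum_(y | T (inl v) y) F y =
  \sum_(u | e v u) F (inl u) + \sum_(A : edge_type e | v \in val A) F (inr A).
Proof. by rewrite big_sumType. Qed.

Lemma sum_tri_adj_new A (F : tri_vertex e -> R) :
  \sum_(y | T (inr A) y) F y = \sum_(u in val A) F (inl u).
Proof. by rewrite big_sumType /= [X in _ + X]big_pred0 // addr0; apply: eq_bigl. Qed.

Lemma deg_tri_old v : (deg T (inl v))%:R = 2 * (deg e v)%:R :> R.
Proof.
rewrite deg_sum sum_tri_adj_old deg_sum.
by rewrite (sum_edges_at e_sym e_irr v (fun=> 1 : R)); ring.
Qed.

Lemma deg_tri_new A : (deg T (inr A))%:R = 2 :> R.
Proof. by rewrite deg_sum sum_tri_adj_new sumr_const (card_edge e_irr). Qed.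

(* [c] is the current injected at the new vertices; half of it is routed
   through each endpoint, which is why [laplacian_tri_lift] expects the
   divergence of [phi] to contain [c/2] at both ends of each edge. *)
Definition tri_lift (phi : V -> R) (c : edge_type e -> R) (x : tri_vertex e) : R :=
  match x with
  | inl v => 2 / 3 * phi v
  | inr A => (\sum_(u in val A) phi u) / 3 + c A / 2
  end.

Lemma laplacian_tri_lift (phi b : V -> R) (c : edge_type e -> R) :
  (forall v, laplacian e phi v = b v + (\sum_(A : edge_type e | v \in val A) c A) / 2) ->
  forall x, laplacian T (tri_lift phi c) x =
    match x with inl v => b v | inr A => c A end.
Proof.
move=> Hphi [v|A]; last first.
  rewrite /laplacian sum_tri_adj_new sumrB sumr_const (card_edge e_irr) /= -mulr_sumr.
  by field.
have new_nbrs : \sum_(A : edge_type e | v \in val A) (tri_lift phi c (inl v) - tri_lift phi c (inr A))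
   = \sum_(u | e v u) (phi v - phi u) / 3 - (\sum_(A : edge_type e | v \in val A) c A) / 2.
  rewrite -(sum_edges_at e_sym e_irr v (fun u => (phi v - phi u) / 3)).
  rewrite mulr_suml -sumrB; apply: eq_bigr => A vA.
  have [EA _ ne] := other_endP e_sym e_irr vA.
  by rewrite /= EA sum_set2 //; ring.
have old_nbrs : \sum_(u | e v u) (tri_lift phi c (inl v) - tri_lift phi c (inl u))
   = 2 / 3 * \sum_(u | e v u) (phi v - phi u).
  by rewrite mulr_sumr; apply: eq_bigr => u _ /=; ring.
rewrite /laplacian sum_tri_adj_old new_nbrs old_nbrs -mulr_suml.
by have := Hphi v; rewrite /laplacian => ->; field.
Qed.

End Triangulation.

Section TriangulationResistance.
Variables (R : realFieldType) (V : finType) (e : rel V).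
Hypotheses (e_sym : symmetric e) (e_irr : irreflexive e) (e_con : connected_graph e).

Local Notation T := (@tri_rel V e).
Local Notation Om := (resistance R e).
Local Notation OmT := (resistance R T).
Local Notation laplacian_G := (laplacian_green R e_sym e_con).
Local Notation resistance_G := (resistance_green R e_sym e_con).
Local Notation GC := (greenC R e_sym e_con).

Lemma resistance_tri_lift (x y : tri_vertex e) phi c :
  (forall v, laplacian e phi v = (inl v == x)%:R - (inl v == y)%:R
               + (\sum_(A : edge_type e | v \in val A) c A) / 2) ->
  (forall A, c A = (inr A == x)%:R - (inr A == y)%:R) ->
  OmT x y = tri_lift phi c x - tri_lift phi c y.
Proof.
move=> Hold Hnew; apply: (resistanceE (tri_connected e_irr e_con)) => z.
by rewrite -[LHS]/(laplacian T _ z) (laplacian_tri_lift e_sym e_irr Hold); case: z.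
Qed.

Lemma resistance_tri_old i j : OmT (inl i) (inl j) = 2 / 3 * Om i j.
Proof.
pose phi v := green R e i i v - green R e i j v.
have Hphi v : laplacian e phi v = (v == i)%:R - (v == j)%:R.
  by rewrite laplacianB !laplacian_G; ring.
rewrite (resistance_tri_lift (phi := phi) (c := fun=> 0)) => [|v|A] /=.
- by rewrite (resistanceE e_con Hphi); ring.
- by rewrite Hphi big1 // (inj_eq inl_inj); ring.
- by rewrite subrr.
Qed.

Lemma resistance_tri_new_old (A : edge_type e) a b k :
  a != b -> val A = [set a; b] ->
  OmT (inr A) (inl k) = (Om a k + Om b k) / 3 - Om a b / 6 + 1 / 2.
Proof.
move=> ab EA.
pose G := green R e a.
pose phi v := 2^-1 * (G a v + G b v) - G k v.
rewrite (resistance_tri_lift (phi := phi) (c := fun B => (B == A)%:R)) => [|v|B] /=.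
- rewrite EA sum_set2 // eqxx /phi /G !(resistance_G a) (GC a b a) (GC a k a) (GC a k b).
  by rewrite mulr1n; field.
- rewrite laplacianB laplacianZ laplacianD !laplacian_G sum_indicator_in EA.
  by rewrite indicator_set2 // (inj_eq inl_inj); field.
- by rewrite (inj_eq inr_inj) subr0.
Qed.

Lemma resistance_tri_new_new (A A' : edge_type e) a b c d :
  a != b -> val A = [set a; b] -> c != d -> val A' = [set c; d] ->
  OmT (inr A) (inr A') + (A' == A)%:R =
  (Om a c + Om a d + Om b c + Om b d) / 6 - (Om a b + Om c d) / 6 + 1.
Proof.
move=> ab EA cd; case: (eqVneq A' A) => [->|A'A] EA'.
  rewrite resistancexx add0r mulr1n.
  have /[!inE] : c \in [set a; b] by rewrite -EA EA' set21.
  have /[!inE] : d \in [set a; b] by rewrite -EA EA' set22.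
  move: cd => /[swap] /orP [] /eqP -> /[swap] /orP [] /eqP -> //; rewrite ?eqxx // => _;
    by rewrite !resistancexx (resistanceC R e_sym e_con b a); field.
pose G := green R e a.
pose phi v := 2^-1 * ((G a v + G b v) - (G c v + G d v)).
rewrite mulr0n addr0.
rewrite (resistance_tri_lift (phi := phi)
           (c := fun B => (B == A)%:R - (B == A')%:R)) => [|v|B] //=.
- rewrite EA EA' !sum_set2 // !eqxx (negbTE A'A) [A == A']eq_sym (negbTE A'A) /phi.
  rewrite /G !(resistance_G a) (GC a b a) (GC a c a) (GC a d a) (GC a c b) (GC a d b) (GC a d c).
  by rewrite mulr1n mulr0n; field.
- rewrite laplacianZ laplacianB !laplacianD !laplacian_G sumrB !sum_indicator_in EA EA'.
  by rewrite !indicator_set2 //; ring.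
Qed.

End TriangulationResistance.

Section TriangulationKirchhoff.
Variables (R : realFieldType) (V : finType) (e : rel V).
Hypotheses (e_sym : symmetric e) (e_irr : irreflexive e) (e_con : connected_graph e).
Hypothesis V_gt0 : (0 < #|V|)%N.

Local Notation T := (@tri_rel V e).
Local Notation Om := (resistance R e).
Local Notation OmT := (resistance R T).
Local Notation D v := ((deg e v)%:R : R).
Local Notation S := (deg_resistance R e).
Local Notation ST := (deg_resistance R T).
Local Notation n := (#|V|%:R : R).
Local Notation m := ((num_edges e)%:R : R).

Lemma sum_adj_affine (g : V -> R) a b c :
  \sum_u \sum_(w | e u w) (a * (g u + g w) + b * Om u w + c) =
  2 * a * \sum_u D u * g u + 2 * b * (n - 1) + 2 * c * m.
Proof.
transitivity (a * (\sum_u \sum_(w | e u w) g u + \sum_u \sum_(w | e u w) g w)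
              + b * \sum_u \sum_(w | e u w) Om u w + c * \sum_u \sum_(w | e u w) 1).
  rewrite mulrDr !mulr_sumr -!big_split /=; apply: eq_bigr => u _.
  by rewrite !mulr_sumr -!big_split /=; apply: eq_bigr => w _; ring.
rewrite [X in a * (_ + X)](sum_adjC e_sym) !sum_adj_deg (foster R e_sym e_con V_gt0).
under [X in c * X]eq_bigr do rewrite mulr1.
by rewrite handshake //; ring.
Qed.

Lemma deg_resistance_tri y :
  ST y = 2 * \sum_j D j * OmT y (inl j) + 2 * \sum_A OmT y (inr A).
Proof.
rewrite /deg_resistance big_sumType !mulr_sumr; congr (_ + _); apply: eq_bigr => x _.
  by rewrite (deg_tri_old R e_sym e_irr) mulrA.
by rewrite (deg_tri_new R e_irr).
Qed.

Lemma sum_resistance_tri_new_old k :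
  \sum_A OmT (inr A) (inl k) = S k / 3 - (n - 1) / 6 + m / 2.
Proof.
rewrite (sum_edges e_sym e_irr
  (f := fun u w => 3^-1 * (Om k u + Om k w) + (- 6^-1) * Om u w + 2^-1)).
  by rewrite sum_adj_affine -/(S k); field.
move=> A u uA; have [EA _ ne] := other_endP e_sym e_irr uA.
rewrite (resistance_tri_new_old R e_sym e_irr e_con k ne EA).
by rewrite !(resistanceC R e_sym e_con k); field.
Qed.

Lemma deg_resistance_tri_old k : ST (inl k) = 2 * S k - (n - 1) / 3 + m.
Proof.
have old : \sum_j D j * OmT (inl k) (inl j) = 2 / 3 * S k.
  rewrite mulr_sumr; apply: eq_bigr => j _.
  by rewrite (resistance_tri_old R e_sym e_irr e_con); ring.
rewrite deg_resistance_tri old.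
under eq_bigr do rewrite (resistanceC R (tri_rel_sym e_sym) (tri_connected e_irr e_con)).
by rewrite sum_resistance_tri_new_old; field.
Qed.

Lemma deg_resistance_add a b : \sum_u D u * (Om a u + Om b u) = S a + S b.
Proof. by rewrite -big_split; apply: eq_bigr => u _; rewrite mulrDr. Qed.

Section NewVertex.
Variables (A : edge_type e) (a b : V).
Hypotheses (ab : a != b) (EA : val A = [set a; b]).

Lemma weighted_resistance_tri_new_old :
  \sum_j D j * OmT (inr A) (inl j) = (S a + S b) / 3 - m * Om a b / 3 + m.
Proof.
transitivity (3^-1 * \sum_j D j * (Om a j + Om b j) + (2^-1 - Om a b / 6) * \sum_j D j).
  rewrite !mulr_sumr -big_split; apply: eq_bigr => j _ /=.
  by rewrite (resistance_tri_new_old R e_sym e_irr e_con j ab EA); ring.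
by rewrite deg_resistance_add (handshake R e_sym e_irr); field.
Qed.

Lemma sum_resistance_tri_new_new :
  \sum_A' OmT (inr A) (inr A') = (S a + S b) / 6 - (n - 1) / 6 + m - m * Om a b / 6 - 1.
Proof.
transitivity (\sum_A' (OmT (inr A) (inr A') + (A' == A)%:R) - 1).
  by rewrite [in RHS]big_split sum_indicator addrK.
rewrite (sum_edges e_sym e_irr (F := fun A' => OmT (inr A) (inr A') + (A' == A)%:R) (f := fun u w =>
  6^-1 * ((Om a u + Om b u) + (Om a w + Om b w)) + (- 6^-1) * Om u w + (1 - Om a b / 6))).
  by rewrite sum_adj_affine deg_resistance_add; field.
move=> A' u uA'; have [EA' _ ne] := other_endP e_sym e_irr uA'.
by rewrite (resistance_tri_new_new R e_sym e_irr e_con ab EA ne EA'); ring.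
Qed.

Lemma deg_resistance_tri_new :
  ST (inr A) = S a + S b - m * Om a b + 4 * m - (n - 1) / 3 - 2.
Proof.
(* Abstracting the resistance keeps [field] from unfolding it. *)
rewrite deg_resistance_tri weighted_resistance_tri_new_old sum_resistance_tri_new_new.
by move: (Om a b) => ?; field.
Qed.

End NewVertex.

Lemma sum_deg_resistance_tri_old :
  \sum_k ST (inl k) = 2 * \sum_k S k - n * ((n - 1) / 3 - m).
Proof.
under eq_bigr do rewrite deg_resistance_tri_old.
by rewrite big_split /= sumrB -mulr_sumr !sumr_const -[#|xpredT|]/#|V|; field.
Qed.

Lemma sum_deg_resistance_tri_new :
  \sum_A ST (inr A) = \sum_u D u * S u - 4 / 3 * m * (n - 1) + 4 * m ^+ 2 - 2 * m.
Proof.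
rewrite (sum_edges e_sym e_irr (F := fun A => ST (inr A))
  (f := fun u w => 1 * (S u + S w) + (- m) * Om u w + (4 * m - (n - 1) / 3 - 2))).
  by rewrite sum_adj_affine; field.
move=> A u uA; have [EA _ ne] := other_endP e_sym e_irr uA.
by rewrite (deg_resistance_tri_new ne EA); ring.
Qed.

End TriangulationKirchhoff.

Theorem theorem4p4 (R : realFieldType) (V : finType) (e : rel V) :
  simple_graph e -> connected_graph e -> (1 < #|V|)%N ->
  add_deg_kirchhoff R (@tri_rel V e) =
    2 * add_deg_kirchhoff R e + 2 * mul_deg_kirchhoff R e
    + ((12 * (num_edges e)%:R ^+ 2 - (num_edges e)%:R * #|V|%:R
        - #|V|%:R ^+ 2 - 2 * (num_edges e)%:R + #|V|%:R) / 3).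
Proof.
move=> [e_sym e_irr] e_con /ltnW V_gt0.
rewrite (add_deg_kirchhoffE R (tri_rel_sym e_sym) (tri_connected e_irr e_con)) big_sumType /=.
rewrite (sum_deg_resistance_tri_old R e_sym e_irr e_con V_gt0).
rewrite (sum_deg_resistance_tri_new R e_sym e_irr e_con V_gt0).
rewrite (add_deg_kirchhoffE R e_sym e_con) mul_deg_kirchhoffE.
by field.
Qed.
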